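(* Let $X=\{x_1,\dots,x_m\}$ and $Y=\{y_1,\dots,y_n\}$ be finite discrete spaces with $m,n>1$, and let $Z=X\circledast Y$. Then $\mathrm{TC}(Z)=n^2$ and $\mathrm{TC}(Z^{\mathrm{op}})=\mathrm{TC}(Y\circledast X)=m^2$.
   Context: Finite $T_0$ spaces are identified with finite posets (open sets are the down-closed sets; $z^\downarrow=\{w:w\le z\}$ is the minimal open neighborhood). The non-Hausdorff join $A\circledast B$ is $A\sqcup B$ with the orders of $A$ and $B$ kept and $a\le b$ for all $a\in A,b\in B$. $Z^{\mathrm{op}}$ is the finite space with the opposite order. Topological complexity is unreduced: $\mathrm{TC}(W)$ is the minimal $k$ such that $W\times W$ is covered by $k$ open sets each admitting a continuous section of $\pi:W^I\to W\times W$, $\gamma\mapsto(\gamma(0),\gamma(1))$, where $W^I$ carries the compact-open topology. *)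

From Stdlib Require Import Reals.
Open Scope R_scope.

(** A finite space given by a carrier [T] and a partial order [le].
    Open sets are the down-closed sets. *)
Definition fs_open {T : Type} (le : T -> T -> Prop) (O : T -> Prop) : Prop :=
  forall x y, le y x -> O x -> O y.

Definition prod_open {T : Type} (le : T -> T -> Prop) (V : T * T -> Prop) : Prop :=
  forall p, V p -> exists O1 O2, fs_open le O1 /\ fs_open le O2 /\
     O1 (fst p) /\ O2 (snd p) /\ (forall q, O1 (fst q) -> O2 (snd q) -> V q).

Definition unit_I (t : R) : Prop := 0 <= t <= 1.

(** Continuous path [I -> W] (values outside [0,1] are irrelevant). *)
Definition is_path {T : Type} (le : T -> T -> Prop) (g : R -> T) : Prop :=
  forall t, unit_I t -> forall O, fs_open le O -> O (g t) ->
    exists d, d > 0 /\ forall s, unit_I s -> Rabs (s - t) < d -> O (g s).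

(** Compact-open topology on W^I: generated by the subbasic sets
    {g | g(K) ⊆ O}, K ⊆ I compact, O ⊆ W open. *)
Inductive co_open {T : Type} (le : T -> T -> Prop) : ((R -> T) -> Prop) -> Prop :=
  | co_sub : forall (K : R -> Prop) (O : T -> Prop),
      compact K -> (forall t, K t -> unit_I t) -> fs_open le O ->
      co_open le (fun g => forall t, K t -> O (g t))
  | co_full : co_open le (fun _ => True)
  | co_inter : forall G1 G2, co_open le G1 -> co_open le G2 ->
      co_open le (fun g => G1 g /\ G2 g)
  | co_union : forall (J : Type) (F : J -> (R -> T) -> Prop),
      (forall j, co_open le (F j)) -> co_open le (fun g => exists j, F j g).

(** [s] is a continuous section of [pi : W^I -> W x W] over [U]
    (U with the subspace topology of W x W). *)
Definition cont_section {T : Type} (le : T -> T -> Prop)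
    (U : T * T -> Prop) (s : T * T -> (R -> T)) : Prop :=
  (forall u, U u -> is_path le (s u) /\ s u 0 = fst u /\ s u 1 = snd u) /\
  (forall G, co_open le G -> exists V, prod_open le V /\
      forall u, U u -> (G (s u) <-> V u)).

Definition tc_cover {T : Type} (le : T -> T -> Prop) (k : nat) : Prop :=
  exists U : nat -> (T * T -> Prop),
    (forall i, (i < k)%nat -> prod_open le (U i)) /\
    (forall p, exists i, (i < k)%nat /\ U i p) /\
    (forall i, (i < k)%nat -> exists s, cont_section le (U i) s).

(** Unreduced topological complexity: TC(W) = k. *)
Definition TC_eq {T : Type} (le : T -> T -> Prop) (k : nat) : Prop :=
  tc_cover le k /\ forall j, tc_cover le j -> (k <= j)%nat.

Definition fin (n : nat) : Type := { i : nat | (i < n)%nat }.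
Definition discrete_le {A : Type} (x y : A) : Prop := x = y.

Definition join_le {A B : Type} (leA : A -> A -> Prop) (leB : B -> B -> Prop)
    (x y : A + B) : Prop :=
  match x, y with
  | inl a, inl a' => leA a a'
  | inr b, inr b' => leB b b'
  | inl _, inr _ => True
  | inr _, inl _ => False
  end.

Definition op_le {T : Type} (le : T -> T -> Prop) (x y : T) : Prop := le y x.

From Stdlib Require Import Reals Lra Lia Classical List IndefiniteDescription.
Open Scope R_scope.

(** All three spaces are posets of height one, "layered" into a lower and an
    upper antichain with every lower point below every upper point; the
    theorem is the instance of one result about such posets: if the lower
    layer has at least two points, TC equals the square of the number of
    upper points.
    - Upper bound: the down-set of each pair (a, b) of upper points is open
      and carries the continuous section sending p to the zigzag path
      fst p -> a <- x0 -> b <- snd p through a lower point x0.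
    - Lower bound: no member of a cover contains two distinct pairs of upper
      points.  A continuous section is monotone, so over such a set it would
      give four paths forming a "cross" (two paths below two others); a cross
      separated at time 0 or 1 is rigid, hence frozen by connectedness of
      [0,1], contradicting that the section joins x1 to x2 over (x1, x2).
      The pigeonhole principle then bounds the size of the cover. *)

Definition near (t : R) (P : R -> Prop) : Prop :=
  exists d, d > 0 /\ forall s, unit_I s -> Rabs (s - t) < d -> P s.

Lemma near_and (t : R) (P Q : R -> Prop) :
  near t P -> near t Q -> near t (fun s => P s /\ Q s).
Proof.
  intros [d1 [Hd1 HP]] [d2 [Hd2 HQ]].
  exists (Rmin d1 d2); split; [now apply Rmin_glb_lt|].
  intros s Hs Hst; split.
  - apply HP; [exact Hs|]. eapply Rlt_le_trans; [exact Hst|apply Rmin_l].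
  - apply HQ; [exact Hs|]. eapply Rlt_le_trans; [exact Hst|apply Rmin_r].
Qed.

Lemma near_mono (t : R) (P Q : R -> Prop) :
  (forall s, unit_I s -> P s -> Q s) -> near t P -> near t Q.
Proof.
  intros PQ [d [Hd HP]]. exists d; split; [exact Hd|].
  intros s Hs Hst. exact (PQ s Hs (HP s Hs Hst)).
Qed.

Definition locally_constant (P : R -> Prop) : Prop :=
  forall t, unit_I t -> near t (fun s => P s <-> P t).

(** Connectedness of [0,1], in the form: a locally constant property that
    holds at [0] holds everywhere.  Supremum argument on the largest
    initial segment where [P] holds. *)
Lemma locally_constant_spreads (P : R -> Prop) :
  locally_constant P -> P 0 -> forall t, unit_I t -> P t.
Proof.
  intros HP P0.
  set (E := fun t => 0 <= t <= 1 /\ forall s, 0 <= s <= t -> P s).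
  assert (E0 : E 0).
  { split; [lra|]. intros s Hs. replace s with 0 by lra. exact P0. }
  assert (Ebound : bound E) by (exists 1; intros t [Ht _]; lra).
  destruct (completeness E Ebound (ex_intro _ 0 E0)) as [c [c_ub c_least]].
  assert (Hc : unit_I c).
  { split; [exact (c_ub 0 E0)|]. apply c_least. intros t [Ht _]; lra. }
  assert (approx : forall d, d > 0 -> exists t, E t /\ c - d < t <= c).
  { intros d Hd. apply NNPP; intro Hno.
    enough (c <= c - d) by lra.
    apply c_least; intros t Et. apply Rnot_lt_le; intro Hlt.
    apply Hno. exists t. split; [exact Et|split; [lra|exact (c_ub t Et)]]. }
  destruct (HP c Hc) as [d [Hd Pc]].
  destruct (approx d Hd) as [t0 [[Ht0 Et0] Ht0c]].
  assert (below : forall s, 0 <= s < c + d -> s <= 1 -> P s).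
  { intros s Hs Hs1. destruct (Rle_lt_dec s t0) as [Hst0|Hst0]; [apply Et0; lra|].
    apply (proj2 (Pc s ltac:(split; lra) ltac:(apply Rabs_def1; lra))).
    apply (proj1 (Pc t0 ltac:(split; lra) ltac:(apply Rabs_def1; lra))). apply Et0; lra. }
  assert (c1 : c = 1).
  { apply NNPP; intro Hc_ne_1. destruct Hc as [Hc0 Hc1].
    pose proof (Rmin_l (c + d / 2) 1) as Hm1.
    pose proof (Rmin_r (c + d / 2) 1) as Hm2.
    assert (Hc' : c < Rmin (c + d / 2) 1) by (apply Rmin_glb_lt; lra).
    enough (Rmin (c + d / 2) 1 <= c) by lra.
    apply c_ub. split; [lra|].
    intros s Hs. apply below; lra. }
  intros t Ht. apply below; destruct Ht; lra.
Qed.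

Lemma locally_constant_const (P : R -> Prop) :
  locally_constant P -> forall t, unit_I t -> (P t <-> P 0).
Proof.
  intros HP t Ht. split.
  - intros Pt. apply NNPP; intro nP0.
    assert (HnP : locally_constant (fun s => ~ P s)).
    { intros u Hu. apply (near_mono u (fun s => P s <-> P u)); [intros; tauto|exact (HP u Hu)]. }
    exact (locally_constant_spreads _ HnP nP0 t Ht Pt).
  - intros P0. exact (locally_constant_spreads P HP P0 t Ht).
Qed.

Lemma pigeonhole (A : Type) (l : list A) (k : nat) (Rel : A -> nat -> Prop) :
  NoDup l ->
  (forall a, In a l -> exists b, (b < k)%nat /\ Rel a b) ->
  (forall a a' b, In a l -> In a' l -> Rel a b -> Rel a' b -> a = a') ->
  (length l <= k)%nat.
Proof.
  intros Hl Hex Hinj.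
  destruct (functional_choice (fun a b => In a l -> (b < k)%nat /\ Rel a b))
    as [f Hf].
  { intros a. destruct (classic (In a l)) as [Ha|Ha].
    - destruct (Hex a Ha) as [b Hb]. exists b. auto.
    - exists 0%nat. tauto. }
  rewrite <- (length_map f l), <- (length_seq k 0).
  apply NoDup_incl_length.
  - apply NoDup_map_NoDup_ForallPairs; [|exact Hl].
    intros a a' Ha Ha' E. apply (Hinj a a' (f a)); [exact Ha|exact Ha'|apply Hf, Ha|].
    rewrite E. apply Hf, Ha'.
  - intros b Hb. apply in_map_iff in Hb as [a [<- Ha]].
    apply in_seq. pose proof (proj1 (Hf a Ha)). lia.
Qed.

Lemma NoDup_list_prod (A B : Type) (l : list A) (l' : list B) :
  NoDup l -> NoDup l' -> NoDup (list_prod l l').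
Proof.
  intros Hl Hl'. induction Hl as [|a l Ha Hl IH]; simpl; [constructor|].
  apply NoDup_app; [|exact IH|].
  - apply NoDup_map_NoDup_ForallPairs; [|exact Hl'].
    intros b b' _ _ E. congruence.
  - intros p Hp Hp'. apply in_map_iff in Hp as [b [<- _]].
    apply in_prod_iff in Hp' as [Ha' _]. contradiction.
Qed.

Section Preorder.
Context {T : Type} {le : T -> T -> Prop}.
Hypothesis le_refl : forall z, le z z.
Hypothesis le_trans : forall a b c, le a b -> le b c -> le a c.

Lemma down_open (w : T) : fs_open le (fun z => le z w).
Proof. intros a b Hba Ha. exact (le_trans _ _ _ Hba Ha). Qed.

(** In a finite space, [g] is continuous at [t] iff near [t] its values lie
    below [g t] (the minimal neighbourhood of [g t] is its down-set). *)
Lemma path_near_below (g : R -> T) (t : R) :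
  is_path le g -> unit_I t -> near t (fun s => le (g s) (g t)).
Proof. intros Hg Ht. exact (Hg t Ht _ (down_open (g t)) (le_refl (g t))). Qed.

Lemma path_of_near_below (g : R -> T) :
  (forall t, unit_I t -> near t (fun s => le (g s) (g t))) -> is_path le g.
Proof.
  intros Hg t Ht O HO Ot. destruct (Hg t Ht) as [d [Hd Hnear]].
  exists d; split; [exact Hd|]. intros s Hs Hst. exact (HO _ _ (Hnear s Hs Hst) Ot).
Qed.

Lemma co_open_down (G : (R -> T) -> Prop) :
  co_open le G -> forall g h, G g -> (forall t, le (h t) (g t)) -> G h.
Proof.
  induction 1 as [K O _ _ HO| |G1 G2 _ IH1 _ IH2|J F _ IH]; intros g h Hg Hhg.
  - intros t Kt. exact (HO _ _ (Hhg t) (Hg t Kt)).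
  - exact I.
  - destruct Hg as [G1g G2g]. split; [exact (IH1 g h G1g Hhg)|exact (IH2 g h G2g Hhg)].
  - destruct Hg as [j Hj]. exists j. exact (IH j g h Hj Hhg).
Qed.

Lemma prod_open_down (V : T * T -> Prop) (p q : T * T) :
  prod_open le V -> V p -> le (fst q) (fst p) -> le (snd q) (snd p) -> V q.
Proof.
  intros HV Vp H1 H2. destruct (HV p Vp) as [O1 [O2 [HO1 [HO2 [Op1 [Op2 HOV]]]]]].
  apply HOV; [exact (HO1 _ _ H1 Op1)|exact (HO2 _ _ H2 Op2)].
Qed.

(** A continuous section over an open set is monotone: evaluation at a time
    [t] is continuous on [W^I], and every map into [T] that is continuous on
    a down-closed set is monotone there. *)
Lemma section_mono (U : T * T -> Prop) (s : T * T -> R -> T) (u v : T * T) :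
  cont_section le U s -> prod_open le U -> U u ->
  le (fst v) (fst u) -> le (snd v) (snd u) ->
  forall t, unit_I t -> le (s v t) (s u t).
Proof.
  intros [_ Hcont] HU Uu H1 H2 t Ht.
  set (G := fun g : R -> T => forall c, t <= c <= t -> le (g c) (s u t)).
  assert (HG : co_open le G).
  { apply (co_sub le (fun c => t <= c <= t) (fun z => le z (s u t)));
      [apply compact_P3| |apply down_open].
    intros c Hc. replace c with t by lra. exact Ht. }
  destruct (Hcont G HG) as [V [HV GV]].
  assert (Vu : V u).
  { apply GV; [exact Uu|]. intros c Hc. replace c with t by lra. apply le_refl. }
  assert (Uv : U v) by exact (prod_open_down U u v HU Uu H1 H2).
  assert (Vv : V v) by exact (prod_open_down V u v HV Vu H1 H2).
  apply (proj2 (GV v Uv) Vv). lra.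
Qed.

Lemma monotone_section_continuous (U : T * T -> Prop) (s : T * T -> R -> T) :
  (forall p q, U p -> le (fst q) (fst p) -> le (snd q) (snd p) ->
     U q /\ forall t, le (s q t) (s p t)) ->
  forall G, co_open le G -> exists V, prod_open le V /\ forall u, U u -> (G (s u) <-> V u).
Proof.
  intros Hmono G HG. exists (fun u => U u /\ G (s u)). split; [|tauto].
  intros p [Up Gp]. exists (fun z => le z (fst p)), (fun z => le z (snd p)).
  split; [apply down_open|]. split; [apply down_open|].
  split; [apply le_refl|]. split; [apply le_refl|].
  intros q H1 H2. destruct (Hmono p q Up H1 H2) as [Uq Hq].
  split; [exact Uq|exact (co_open_down G HG _ _ Gp Hq)].
Qed.

Definition zigzag (a b c : T) (p : T * T) (t : R) : T :=
  if Rlt_dec t (1/3) then fst p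
  else if Req_EM_T t (1/3) then a
  else if Rlt_dec t (2/3) then c
  else if Req_EM_T t (2/3) then b
  else snd p.

Lemma zigzag_cases (a b c : T) (p : T * T) (t : R) :
  (t < 1/3 /\ zigzag a b c p t = fst p) \/ (t = 1/3 /\ zigzag a b c p t = a) \/
  (1/3 < t < 2/3 /\ zigzag a b c p t = c) \/ (t = 2/3 /\ zigzag a b c p t = b) \/
  (2/3 < t /\ zigzag a b c p t = snd p).
Proof.
  unfold zigzag.
  destruct (Rlt_dec t (1/3)); [left; auto|].
  destruct (Req_EM_T t (1/3)); [right; left; auto|].
  destruct (Rlt_dec t (2/3)); [right; right; left; split; [lra|auto]|].
  destruct (Req_EM_T t (2/3)); [right; right; right; left; auto|].
  right; right; right; right; split; [lra|auto].
Qed.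

Lemma zigzag_path (a b c : T) (p : T * T) :
  le (fst p) a -> le c a -> le c b -> le (snd p) b -> is_path le (zigzag a b c p).
Proof.
  intros Hpa Hca Hcb Hpb. apply path_of_near_below. intros t _.
  destruct (zigzag_cases a b c p t)
    as [[Ht E]|[[Ht E]|[[Ht E]|[[Ht E]|[Ht E]]]]]; rewrite E;
    [exists (1/3 - t) | exists (1/3) | exists (Rmin (t - 1/3) (2/3 - t))
    | exists (1/3) | exists (t - 2/3)];
    (split; [try apply Rmin_glb_lt; lra|]);
    intros s _ Hst; apply Rabs_def2 in Hst;
    try (unfold Rmin in Hst; destruct (Rle_dec (t - 1/3) (2/3 - t)));
    destruct (zigzag_cases a b c p s)
      as [[Hs Es]|[[Hs Es]|[[Hs Es]|[[Hs Es]|[Hs Es]]]]]; rewrite Es;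
    first [exfalso; lra | assumption | apply le_refl].
Qed.

Lemma zigzag_mono (a b c : T) (p q : T * T) :
  le (fst q) (fst p) -> le (snd q) (snd p) ->
  forall t, le (zigzag a b c q t) (zigzag a b c p t).
Proof.
  intros H1 H2 t. unfold zigzag.
  repeat destruct (Rlt_dec _ _); repeat destruct (Req_EM_T _ _); auto.
Qed.

Lemma zigzag_0 (a b c : T) (p : T * T) : zigzag a b c p 0 = fst p.
Proof. unfold zigzag. destruct (Rlt_dec 0 (1/3)); [reflexivity|lra]. Qed.

Lemma zigzag_1 (a b c : T) (p : T * T) : zigzag a b c p 1 = snd p.
Proof.
  unfold zigzag.
  destruct (Rlt_dec 1 (1/3)); [lra|]. destruct (Req_EM_T 1 (1/3)); [lra|].
  destruct (Rlt_dec 1 (2/3)); [lra|]. destruct (Req_EM_T 1 (2/3)); [lra|reflexivity].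
Qed.
End Preorder.

Section Layered.
Context {T : Type} {le : T -> T -> Prop} {lower : T -> bool}.
Hypothesis layered : forall z w, le z w <-> z = w \/ (lower z = true /\ lower w = false).

Lemma layered_refl (z : T) : le z z.
Proof. apply layered; auto. Qed.

Lemma layered_trans (a b c : T) : le a b -> le b c -> le a c.
Proof. rewrite !layered. intros [->|[H1 H2]] [->|[H3 H4]]; auto; congruence. Qed.

Lemma below_lower_eq (z w : T) : lower w = true -> le z w -> z = w.
Proof. rewrite layered. intros Hw [->|[_ H]]; congruence. Qed.

Lemma upper_below_eq (z w : T) : lower z = false -> le z w -> z = w.
Proof. rewrite layered. intros Hz [->|[H _]]; congruence. Qed.

Lemma lower_below_upper (z w : T) : lower z = true -> lower w = false -> le z w.
Proof. intros; apply layered; auto. Qed.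

Lemma below_distinct_is_lower (z a b : T) : le z a -> le z b -> a <> b -> lower z = true.
Proof.
  intros Ha Hb Hab. destruct (lower z) eqn:Hz; [reflexivity|].
  exfalso. apply Hab. rewrite <- (upper_below_eq z a Hz Ha). exact (upper_below_eq z b Hz Hb).
Qed.

Lemma above_distinct_is_upper (a c d : T) : le c a -> le d a -> c <> d -> lower a = false.
Proof.
  intros Hc Hd Hcd. destruct (lower a) eqn:Ha; [|reflexivity].
  exfalso. apply Hcd. rewrite (below_lower_eq c a Ha Hc). exact (eq_sym (below_lower_eq d a Ha Hd)).
Qed.

(** Quadruples [(a, b, c, d)] with [c] and [d] both below [a] and [b]: the
    values at one time of two paths and of two paths running below both. *)
Definition cross (q : T * T * T * T) : Prop :=
  let '(a, b, c, d) := q in le c a /\ le c b /\ le d a /\ le d b.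

Definition separated (q : T * T * T * T) : Prop :=
  let '(a, b, c, d) := q in a <> b /\ c <> d.

Definition below4 (q' q : T * T * T * T) : Prop :=
  let '(a', b', c', d') := q' in let '(a, b, c, d) := q in
  le a' a /\ le b' b /\ le c' c /\ le d' d.

(** Rigidity: a separated cross cannot be moved down, nor can a lower cross
    be separated; in both cases [c, d] are lower and [a, b] are upper. *)
Lemma cross_rigid (q q' : T * T * T * T) :
  cross q -> cross q' -> below4 q' q -> separated q \/ separated q' -> q' = q.
Proof.
  destruct q as [[[a b] c] d], q' as [[[a' b'] c'] d']; simpl.
  intros [Hca [Hcb [Hda Hdb]]] [Hca' [Hcb' [Hda' Hdb']]] [Ha [Hb [Hc Hd]]].
  assert (bottoms : a <> b -> c' = c /\ d' = d).
  { intros Hab. split.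
    - exact (below_lower_eq c' c (below_distinct_is_lower c a b Hca Hcb Hab) Hc).
    - exact (below_lower_eq d' d (below_distinct_is_lower d a b Hda Hdb Hab) Hd). }
  assert (tops : c' <> d' -> a' = a /\ b' = b).
  { intros Hcd. split.
    - exact (upper_below_eq a' a (above_distinct_is_upper a' c' d' Hca' Hda' Hcd) Ha).
    - exact (upper_below_eq b' b (above_distinct_is_upper b' c' d' Hcb' Hdb' Hcd) Hb). }
  intros [[Hab Hcd]|[Hab Hcd]].
  - destruct (bottoms Hab) as [-> ->]. destruct (tops Hcd) as [-> ->]. reflexivity.
  - destruct (tops Hcd) as [-> ->]. destruct (bottoms Hab) as [-> ->]. reflexivity.
Qed.

(** Four paths forming a cross at every time are frozen as soon as they are
    separated at some time: by rigidity and local monotonicity of paths, the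
    property "same values as at time [t0]" is locally constant. *)
Lemma separated_cross_frozen (ga de e1 e2 : R -> T) (t0 : R) :
  is_path le ga -> is_path le de -> is_path le e1 -> is_path le e2 ->
  (forall t, unit_I t -> cross (ga t, de t, e1 t, e2 t)) ->
  unit_I t0 -> separated (ga t0, de t0, e1 t0, e2 t0) ->
  forall t, unit_I t -> (ga t, de t, e1 t, e2 t) = (ga t0, de t0, e1 t0, e2 t0).
Proof.
  intros Pga Pde Pe1 Pe2 Hcross Ht0 Hsep.
  set (quad := fun t => (ga t, de t, e1 t, e2 t)).
  assert (rigid_near : forall t, unit_I t ->
    near t (fun s => separated (quad t) \/ separated (quad s) -> quad s = quad t)).
  { intros t Ht.
    pose proof (path_near_below layered_refl layered_trans ga t Pga Ht) as Nga.
    pose proof (path_near_below layered_refl layered_trans de t Pde Ht) as Nde.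
    pose proof (path_near_below layered_refl layered_trans e1 t Pe1 Ht) as Ne1.
    pose proof (path_near_below layered_refl layered_trans e2 t Pe2 Ht) as Ne2.
    refine (near_mono t _ _ _
      (near_and t _ _ (near_and t _ _ Nga Nde) (near_and t _ _ Ne1 Ne2))).
    intros s Hs [[Hga Hde] [He1 He2]].
    apply cross_rigid; [exact (Hcross t Ht)|exact (Hcross s Hs)|simpl; auto]. }
  assert (Hconst : locally_constant (fun t => quad t = quad t0)).
  { intros t Ht. refine (near_mono t _ _ _ (rigid_near t Ht)).
    intros s _ Hrigid. split; intros E.
    - rewrite <- E. symmetry. apply Hrigid. right. rewrite E. exact Hsep.
    - rewrite <- E. apply Hrigid. left. rewrite E. exact Hsep. }
  intros t Ht.
  change (quad t = quad t0).
  apply (locally_constant_const _ Hconst t Ht), (locally_constant_const _ Hconst t0 Ht0).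
  reflexivity.
Qed.

(** The section, restricted to the pairs
    [u], [u'] and to the pairs of lower points [(x1, x2)], [(x2, x1)] below
    them, gives four paths forming a cross; the cross is separated at time 0
    or at time 1, hence frozen, although [(x1, x2)] is sent to a path from
    [x1] to [x2]. *)
Lemma section_separates (U : T * T -> Prop) (s : T * T -> R -> T) (u u' : T * T) (x1 x2 : T) :
  prod_open le U -> cont_section le U s -> U u -> U u' ->
  lower (fst u) = false -> lower (snd u) = false ->
  lower (fst u') = false -> lower (snd u') = false ->
  lower x1 = true -> lower x2 = true -> x1 <> x2 -> u = u'.
Proof.
  intros HU Hs Uu Uu' Hu1 Hu2 Hu1' Hu2' Hx1 Hx2 Hx12.
  set (v := (x1, x2)). set (w := (x2, x1)).
  assert (Hv : U v) by (apply (prod_open_down U u _ HU Uu); auto using lower_below_upper).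
  assert (Hw : U w) by (apply (prod_open_down U u _ HU Uu); auto using lower_below_upper).
  destruct (proj1 Hs u Uu) as [Pu [Eu0 Eu1]].
  destruct (proj1 Hs u' Uu') as [Pu' [Eu0' Eu1']].
  destruct (proj1 Hs v Hv) as [Pv [Ev0 Ev1]].
  destruct (proj1 Hs w Hw) as [Pw [Ew0 Ew1]].
  assert (Hcross : forall t, unit_I t -> cross (s u t, s u' t, s v t, s w t)).
  { intros t Ht.
    split; [|split; [|split]]; apply (section_mono layered_refl layered_trans U s);
      simpl; auto using lower_below_upper. }
  pose proof (fun t0 => separated_cross_frozen _ _ _ _ t0 Pu Pu' Pv Pw Hcross) as frozen.
  assert (moving : (s u 1, s u' 1, s v 1, s w 1) <> (s u 0, s u' 0, s v 0, s w 0)).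
  { rewrite Eu0, Eu1, Eu0', Eu1', Ev0, Ev1, Ew0, Ew1. simpl.
    intros E. injection E. auto. }
  assert (I0 : unit_I 0) by (split; lra). assert (I1 : unit_I 1) by (split; lra).
  destruct (classic (fst u = fst u')) as [E1|E1];
    [destruct (classic (snd u = snd u')) as [E2|E2]|].
  - destruct u, u'; simpl in *; congruence.
  - exfalso. apply moving. symmetry. apply (frozen 1 I1); [|exact I0].
    rewrite Eu1, Eu1', Ev1, Ew1. simpl. auto.
  - exfalso. apply moving. apply (frozen 0 I0); [|exact I1].
    rewrite Eu0, Eu0', Ev0, Ew0. simpl. auto.
Qed.

Variable ys : list T.
Hypothesis ys_nodup : NoDup ys.
Hypothesis ys_upper : forall z, lower z = false <-> In z ys.

(** Lower bound: the [|ys|^2] pairs of upper points lie in pairwise distinct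
    members of any cover by open sets with continuous sections. *)
Lemma tc_lower_bound (x1 x2 : T) (k : nat) :
  lower x1 = true -> lower x2 = true -> x1 <> x2 ->
  tc_cover le k -> (length ys * length ys <= k)%nat.
Proof.
  intros Hx1 Hx2 Hx12 [U [HU [Hcov Hsec]]].
  rewrite <- length_prod.
  apply (pigeonhole _ _ _ (fun p i => (i < k)%nat /\ U i p)).
  - exact (NoDup_list_prod _ _ _ _ ys_nodup ys_nodup).
  - intros p _. destruct (Hcov p) as [i Hi]. exists i. tauto.
  - intros [a b] [a' b'] i Hp Hp' [Hi Up] [_ Up'].
    apply in_prod_iff in Hp as [Ha Hb]. apply in_prod_iff in Hp' as [Ha' Hb'].
    destruct (Hsec i Hi) as [s Hs].
    apply (section_separates (U i) s _ _ x1 x2 (HU i Hi) Hs Up Up'); simpl;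
      try apply ys_upper; assumption.
Qed.

Lemma below_listed (z : T) : ys <> nil -> exists a, In a ys /\ le z a.
Proof.
  intros Hys. destruct (lower z) eqn:Hz.
  - assert (Hne : exists a, In a ys)
      by (destruct ys as [|a l]; [congruence|exists a; left; reflexivity]).
    destruct Hne as [a Ha]. exists a. split; [exact Ha|].
    apply lower_below_upper; [exact Hz|apply ys_upper, Ha].
  - exists z. split; [apply ys_upper, Hz|apply layered_refl].
Qed.

(** Upper bound: for each pair [(a, b)] of upper points, the down-set of
    [(a, b)] carries the continuous section [p |-> zigzag a b x0 p], passing
    through a lower point [x0]; these [|ys|^2] open sets cover [T * T]. *)
Lemma tc_upper_bound (x0 : T) :
  lower x0 = true -> ys <> nil -> tc_cover le (length ys * length ys).
Proof.
  intros Hx0 Hys.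
  set (target := fun i => nth i (list_prod ys ys) (x0, x0)).
  set (U := fun i (p : T * T) => le (fst p) (fst (target i)) /\ le (snd p) (snd (target i))).
  exists U. split; [|split].
  - intros i _ p [Hp1 Hp2].
    exists (fun z => le z (fst (target i))), (fun z => le z (snd (target i))).
    split; [exact (down_open layered_trans _)|]. split; [exact (down_open layered_trans _)|].
    split; [exact Hp1|]. split; [exact Hp2|]. intros q Hq1 Hq2. split; assumption.
  - intros p.
    destruct (below_listed (fst p) Hys) as [a [Ha Hpa]].
    destruct (below_listed (snd p) Hys) as [b [Hb Hpb]].
    destruct (In_nth _ (a, b) (x0, x0) (proj2 (in_prod_iff _ _ a b) (conj Ha Hb)))
      as [i [Hi Ei]].
    exists i. rewrite <- length_prod. unfold U, target. rewrite Ei. auto.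
  - intros i Hi. rewrite <- length_prod in Hi. unfold U.
    assert (Ht : In (target i) (list_prod ys ys)) by (apply nth_In, Hi).
    destruct (target i) as [a b] eqn:Ei. apply in_prod_iff in Ht as [Ha Hb].
    apply ys_upper in Ha, Hb.
    exists (zigzag a b x0). split.
    + intros p [Hp1 Hp2]. simpl in Hp1, Hp2.
      split; [apply (zigzag_path layered_refl); auto using lower_below_upper|].
      split; [apply zigzag_0|apply zigzag_1].
    + apply monotone_section_continuous.
      * exact layered_refl.
      * exact layered_trans.
      * intros p q [Hp1 Hp2] H1 H2. split.
        -- split; eapply layered_trans; eassumption.
        -- exact (zigzag_mono layered_refl a b x0 p q H1 H2).
Qed.

Lemma TC_layered (x1 x2 : T) :
  lower x1 = true -> lower x2 = true -> x1 <> x2 -> ys <> nil ->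
  TC_eq le (length ys * length ys).
Proof.
  intros Hx1 Hx2 Hx12 Hys. split.
  - exact (tc_upper_bound x1 Hx1 Hys).
  - intros k Hk. exact (tc_lower_bound x1 x2 k Hx1 Hx2 Hx12 Hk).
Qed.
End Layered.
Close Scope R_scope.

Lemma fin_listing (n : nat) : exists l : list (fin n), NoDup l /\ length l = n /\ forall a, In a l.
Proof.
  destruct n as [|n].
  - exists nil. split; [constructor|]. split; [reflexivity|]. intros [i Hi]. lia.
  - set (to_fin := fun i => exist (fun j => j < S n) (i mod S n)
                                 (Nat.mod_upper_bound i (S n) (Nat.neq_succ_0 n))).
    exists (map to_fin (seq 0 (S n))). split; [|split].
    + apply NoDup_map_NoDup_ForallPairs; [|apply seq_NoDup].
      intros i j Hi Hj E. apply in_seq in Hi, Hj.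
      apply (f_equal (@proj1_sig _ _)) in E. unfold to_fin in E. cbn [proj1_sig] in E.
      rewrite !Nat.mod_small in E by lia. exact E.
    + rewrite length_map, length_seq. reflexivity.
    + intros [i Hi]. apply in_map_iff. exists i. split; [|apply in_seq; lia].
      apply eq_sig_hprop; [intros; apply Peano_dec.le_unique|].
      apply Nat.mod_small, Hi.
Qed.

Lemma TC_layered_fin (T : Type) (le : T -> T -> Prop) (lower : T -> bool)
    (n : nat) (up : fin n -> T) (x1 x2 : T) :
  (forall z w, le z w <-> z = w \/ (lower z = true /\ lower w = false)) ->
  (forall a b, up a = up b -> a = b) ->
  (forall z, lower z = false <-> exists a, z = up a) ->
  (0 < n)%nat -> lower x1 = true -> lower x2 = true -> x1 <> x2 ->
  TC_eq le (n * n).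
Proof.
  intros Hlayered Hinj Hupper Hn Hx1 Hx2 Hx12.
  destruct (fin_listing n) as [l [Hnodup [Hlen Hall]]].
  replace (n * n)%nat with (length (map up l) * length (map up l))%nat
    by (rewrite length_map, Hlen; reflexivity).
  refine (TC_layered Hlayered (map up l) _ _ x1 x2 Hx1 Hx2 Hx12 _).
  - apply NoDup_map_NoDup_ForallPairs; [|exact Hnodup]. intros a b _ _. apply Hinj.
  - intros z. rewrite Hupper, in_map_iff. split.
    + intros [a ->]. exists a. split; [reflexivity|apply Hall].
    + intros [a [<- _]]. exists a. reflexivity.
  - intros E. apply (f_equal (@length T)) in E. rewrite length_map, Hlen in E.
    simpl in E. lia.
Qed.

Definition is_left {A B : Type} (z : A + B) : bool :=
  match z with inl _ => true | inr _ => false end.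

Lemma join_discrete_layered (A B : Type) (z w : A + B) :
  join_le (@discrete_le A) (@discrete_le B) z w <->
  z = w \/ (is_left z = true /\ is_left w = false).
Proof.
  unfold discrete_le. destruct z as [a|b], w as [a'|b']; simpl;
    (split; [intros H|intros [H|[H1 H2]]]);
    first [left; congruence | right; split; reflexivity | congruence | exact I | contradiction].
Qed.

Lemma op_join_discrete_layered (A B : Type) (z w : A + B) :
  op_le (join_le (@discrete_le A) (@discrete_le B)) z w <->
  z = w \/ (negb (is_left z) = true /\ negb (is_left w) = false).
Proof.
  unfold op_le, discrete_le. destruct z as [a|b], w as [a'|b']; simpl;
    (split; [intros H|intros [H|[H1 H2]]]);
    first [left; congruence | right; split; reflexivity | congruence | exact I | contradiction].
Qed.

Definition fin_elt (n i : nat) (Hi : i < n) : fin n := exist _ i Hi.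

Lemma join_discrete_TC (m n : nat) : 1 < m -> 1 < n ->
  TC_eq (join_le (@discrete_le (fin m)) (@discrete_le (fin n))) (n * n).
Proof.
  intros Hm Hn.
  apply (TC_layered_fin _ _ _ n inr
           (inl (fin_elt m 0 (Nat.lt_trans 0 1 m Nat.lt_0_1 Hm))) (inl (fin_elt m 1 Hm))
           (join_discrete_layered _ _)).
  - intros a b E. congruence.
  - intros [a|b]; split; simpl.
    + discriminate.
    + intros [b E]; discriminate.
    + intros _. exists b. reflexivity.
    + reflexivity.
  - lia.
  - reflexivity.
  - reflexivity.
  - intros E. injection E. discriminate.
Qed.

Lemma op_join_discrete_TC (m n : nat) : 1 < m -> 1 < n ->
  TC_eq (op_le (join_le (@discrete_le (fin m)) (@discrete_le (fin n)))) (m * m).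
Proof.
  intros Hm Hn.
  apply (TC_layered_fin _ _ _ m inl
           (inr (fin_elt n 0 (Nat.lt_trans 0 1 n Nat.lt_0_1 Hn))) (inr (fin_elt n 1 Hn))
           (op_join_discrete_layered _ _)).
  - intros a b E. congruence.
  - intros [a|b]; split; simpl.
    + intros _. exists a. reflexivity.
    + reflexivity.
    + discriminate.
    + intros [a E]; discriminate.
  - lia.
  - reflexivity.
  - reflexivity.
  - intros E. injection E. discriminate.
Qed.

Theorem theorem3 (m n : nat) (hm : (1 < m)%nat) (hn : (1 < n)%nat) :
  TC_eq (join_le (@discrete_le (fin m)) (@discrete_le (fin n))) (n * n)%nat /\
  TC_eq (op_le (join_le (@discrete_le (fin m)) (@discrete_le (fin n)))) (m * m)%nat /\
  TC_eq (join_le (@discrete_le (fin n)) (@discrete_le (fin m))) (m * m)%nat.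
Proof.
  split; [|split].
  - exact (join_discrete_TC m n hm hn).
  - exact (op_join_discrete_TC m n hm hn).
  - exact (join_discrete_TC n m hn hm).
Qed.
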